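(* In REFORM with the RPTSC reward scheme with at most $k=2$ pairings, in the setting and expected-reward model described in the context, suppose all agents other than $a_i$ play the trustworthy strategy and $a_i$ plays the random strategy, reporting $y_i$ at time $t_i$. Then the expected reward of $a_i$ is $$E_{ra}=\alpha r\beta(t_i)(1-p_{y_i})\left(1-(1-p_{y_i})^{n-1}\right).$$
   Context: Setting. In each round there are $n\ge 2$ statistically independent, a-priori similar tasks with common finite answer space $\mathcal{X}$. An agent either exerts high effort and obtains an evaluation $x_i\in\mathcal{X}$, or exerts low effort and has no evaluation ($x_i=\varnothing$). Trustworthy strategy: exert high effort and report the true evaluation at the time $t_i^*$ needed to solve the task. Random strategy: exert low effort and report an answer drawn from the agent's prior, at any time. A decay factor $\beta(t)>0$, decreasing in $t$, multiplies rewards; each agent has a reputation (TERM) score $\Omega$. REFORM with RPTSC reward ($\alpha>0$, at most $k$ pairings): sample $n-1$ reports, one from each other task, and let $f(y_i)$ be the fraction equal to $y_i$. Repeatedly choose a random peer $a_p$ on the same task with report $y_p$ and score $\Omega_p$: if $y_i=y_p$, reward $\alpha\beta(t_i)(1/f(y_i)-1)$ and stop; otherwise if $\Omega_i\le\Omega_p$ or $k$ pairings used, reward $-\alpha\beta(t_i)$ (or $0$ if $f(y_i)=0$) and stop; else draw a new peer. Beliefs. $p_y=P_p(y)\in(0,1)$ is the prior probability that a peer's evaluation is $y$; $P_{p|i}(y\mid x_i)$ is the posterior given $a_i$'s evaluation, and $P_{p|i}(y\mid\varnothing)=p_y$. $q_y=Q_p(y)$, $q'_y=Q_{p|i}(y\mid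 x_i)$ are the corresponding beliefs about peers' reports; when all other agents are trustworthy, $q_y=p_y$ and $q'_y=P_{p|i}(y\mid x_i)$. $r\in[0,1]$ is $a_i$'s belief that a random peer has TERM score below $\Omega_i$, the same for every peer. Expected-reward model. If $q_{y_i}>0$, with $E'=\alpha\left(\frac{q'_{y_i}}{q_{y_i}}-1\right)\left(1-(1-q_{y_i})^{n-1}\right)$ and $M'=\alpha\left(\frac{1}{q_{y_i}}-1\right)\left(1-(1-q_{y_i})^{n-1}\right)$, the expected reward is computed pairing by pairing independently: with probability $1-r$ the peer's score is not below $\Omega_i$ and the pairing is final with expected reward $\beta(t_i)E'$; the $k$-th pairing is always final with expected reward $\beta(t_i)E'$; otherwise (probability $r$, not last pairing) with probability $q'_{y_i}$ reports match giving $\beta(t_i)M'$, and with probability $1-q'_{y_i}$ a new pairing is made. *)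

From mathcomp Require Import all_boot all_order all_algebra.
Set Implicit Arguments. Unset Strict Implicit. Unset Printing Implicit Defensive.
Import Order.TTheory GRing.Theory Num.Theory.
Local Open Scope ring_scope.

Definition Eprime (R : realFieldType) (alpha : R) (n : nat) (q q' : R) : R :=
  alpha * (q' / q - 1) * (1 - (1 - q) ^+ (n.-1)).

Definition Mprime (R : realFieldType) (alpha : R) (n : nat) (q : R) : R :=
  alpha * (1 / q - 1) * (1 - (1 - q) ^+ (n.-1)).

(* Expected reward of a_i in REFORM/RPTSC when m pairings are still allowed,
   following the pairing-by-pairing model of the context:
   - the last allowed pairing (m = 1) is final with expected reward b*E';
   - otherwise, w.p. 1-r the pairing is final with reward b*E';
     w.p. r: w.p. q' reports match giving b*M', w.p. 1-q' a new pairing.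
   [b] stands for beta(t_i). (m = 0 is never used; set to 0.) *)
Fixpoint rptsc_exp_reward (R : realFieldType) (alpha b r : R) (n : nat)
  (q q' : R) (m : nat) : R :=
  match m with
  | 0 => 0
  | 1 => b * Eprime alpha n q q'
  | m'.+1 => (1 - r) * (b * Eprime alpha n q q')
             + r * (q' * (b * Mprime alpha n q)
                    + (1 - q') * rptsc_exp_reward alpha b r n q q' m')
  end.

From mathcomp Require Import all_boot all_order all_algebra.
From mathcomp Require Import ring.
Import Order.TTheory GRing.Theory Num.Theory.
Local Open Scope ring_scope.

(* A random reporter has no evaluation, so its posterior is its prior
   ([q' = q]) and [E'] vanishes.  The only paying outcome of a pairing is a
   lower-score peer with a matching report, so the recursion solves to a
   geometric sum in [r (1 - q)], which for two pairings is the single term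
   [r * b * q * M']. *)

Section UninformativeReport.

Variables (R : realFieldType) (alpha b r : R) (n : nat) (q : R).
Hypothesis q_neq0 : q != 0.

Lemma Eprime_prior : Eprime alpha n q q = 0.
Proof. by rewrite /Eprime divff // subrr mulr0 mul0r. Qed.

Lemma mul_Mprime :
  q * Mprime alpha n q = alpha * (1 - q) * (1 - (1 - q) ^+ n.-1).
Proof. by rewrite /Mprime; field. Qed.

Lemma rptsc_exp_reward_prior (m : nat) :
  rptsc_exp_reward alpha b r n q q m.+1
  = r * b * (alpha * (1 - q) * (1 - (1 - q) ^+ n.-1))
    * \sum_(j < m) (r * (1 - q)) ^+ j.
Proof.
have sum_geomS (x : R) (k : nat) :
    \sum_(j < k.+1) x ^+ j = 1 + x * \sum_(j < k) x ^+ j.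
  rewrite big_ord_recl expr0 mulr_sumr; congr (_ + _).
  by apply: eq_bigr => j _; exact: exprS.
elim: m => [|m IHm]; first by rewrite /= Eprime_prior big_ord0 !mulr0.
rewrite [LHS]/= -/(rptsc_exp_reward alpha b r n q q m.+1) IHm Eprime_prior.
by rewrite sum_geomS -mul_Mprime; ring.
Qed.

End UninformativeReport.

(* [post x] is the posterior given a_i's evaluation [x], with [None] standing
   for "no evaluation". *)
Theorem lemma4 (R : realFieldType) (X : finType) (n : nat) (alpha r ti : R)
  (beta : R -> R) (p : X -> R) (post : option X -> X -> R) (yi : X) :
  (2 <= n)%N ->
  0 < alpha ->
  (forall t, 0 < beta t) ->
  (forall s t, s < t -> beta t < beta s) ->
  (forall y, 0 < p y < 1) ->
  \sum_(y : X) p y = 1 ->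
  (forall y, post None y = p y) ->
  0 <= r <= 1 ->
  let q := p yi in
  let q' := post None yi in
  rptsc_exp_reward alpha (beta ti) r n q q' 2
  = alpha * r * beta ti * (1 - p yi) * (1 - (1 - p yi) ^+ (n - 1)).
Proof.
move=> _ _ _ _ p_range _ post_prior _ q q'.
have q_neq0 : q != 0 by case/andP: (p_range yi) => /gt_eqF ->.
rewrite /q' post_prior rptsc_exp_reward_prior // big_ord1 expr0 mulr1 subn1.
by rewrite /q; ring.
Qed.
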